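(* Let $k\ge1$ and let $\Gamma\subset\mathbb{R}_+^k$ be a nonempty compact set. Let $\mu_n=(q_n,s_n,b_n)$, $n=1,2,\dots$, and $\mu=(q,s,b)$ be mechanisms in $\mathcal{M}_\Gamma$. Suppose that $b_n$ converges pointwise to $b$ on $\mathbb{R}^k$ and that $\mu$ is seller favorable. Then $\limsup_{n\to\infty}s_n(x)\le s(x)$ for every $x\in\mathbb{R}_+^k$, and consequently $\limsup_{n\to\infty}R(\mu_n;X)\le R(\mu;X)$ for every random valuation $X$ with values in $\mathbb{R}_+^k$ and finite expectation ($\mathbb{E}\|X\|<\infty$).
   Context: A $\Gamma$-mechanism consists of $q:\mathbb{R}_+^k\to\Gamma$ and $s:\mathbb{R}_+^k\to\mathbb{R}$; it is IC if $q(x)\cdot x-s(x)\ge q(y)\cdot x-s(y)$ for all $x,y\in\mathbb{R}_+^k$, IR if $q(x)\cdot x-s(x)\ge0$ for all $x\in\mathbb{R}_+^k$, and NPT (no positive transfer) if $s(x)\ge0$ for all $x\in\mathbb{R}_+^k$. $\mathcal{M}_\Gamma$ is the set of IC, IR and NPT $\Gamma$-mechanisms. The buyer payoff function of the mechanism is the function $b:\mathbb{R}^k\to\mathbb{R}$, $b(x):=\sup_{z\in\mathbb{R}_+^k}[q(z)\cdot x-s(z)]$ (for IC mechanisms $b(x)=q(x)\cdot x-s(x)$ on $\mathbb{R}_+^k$); a mechanism is written $\mu=(q,s,b)$. For a convex $f:\mathbb{R}^k\to\mathbb{R}$, $f'(x;y):=\lim_{\delta\to0^+}(f(x+\delta y)-f(x))/\delta$.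 A mechanism $\mu=(q,s,b)\in\mathcal{M}_\Gamma$ is seller favorable if $s(x)=b'(x;x)-b(x)$ for every $x\in\mathbb{R}_+^k$. The revenue is $R(\mu;X):=\mathbb{E}[s(X)]$. *)

From HB Require Import structures.
From mathcomp Require Import all_boot all_order all_algebra.
From mathcomp Require Import all_classical all_reals all_analysis.
Set Implicit Arguments. Unset Strict Implicit. Unset Printing Implicit Defensive.
Import Order.TTheory GRing.Theory Num.Theory.
Import numFieldNormedType.Exports.
Local Open Scope classical_set_scope.
Local Open Scope ring_scope.

Definition dotv {R : realType} {k : nat} (u v : 'rV[R]_k) : R :=
  \sum_(i < k) u ord0 i * v ord0 i.

Definition nonneg {R : realType} {k : nat} (x : 'rV[R]_k) : Prop :=
  forall i : 'I_k, 0 <= x ord0 i.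

(* Gamma-mechanism (q, s), given on all of R^k but only its values on R_+^k matter *)
Definition IC {R : realType} {k : nat} (q : 'rV[R]_k -> 'rV[R]_k) (s : 'rV[R]_k -> R) :=
  forall x y, nonneg x -> nonneg y -> dotv (q y) x - s y <= dotv (q x) x - s x.
Definition IR {R : realType} {k : nat} (q : 'rV[R]_k -> 'rV[R]_k) (s : 'rV[R]_k -> R) :=
  forall x, nonneg x -> 0 <= dotv (q x) x - s x.
Definition NPT {R : realType} {k : nat} (s : 'rV[R]_k -> R) :=
  forall x, nonneg x -> 0 <= s x.

Definition in_M {R : realType} {k : nat} (Gamma : set 'rV[R]_k)
  (q : 'rV[R]_k -> 'rV[R]_k) (s : 'rV[R]_k -> R) : Prop :=
  (forall x, nonneg x -> Gamma (q x)) /\ IC q s /\ IR q s /\ NPT s.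

Definition payoff {R : realType} {k : nat} (q : 'rV[R]_k -> 'rV[R]_k) (s : 'rV[R]_k -> R)
  (x : 'rV[R]_k) : R :=
  sup [set dotv (q z) x - s z | z in nonneg].

(* seller favorable: s(x) = b'(x;x) - b(x), where b'(x;x) is the limit of the
   difference quotient (b(x + d x) - b(x))/d as d -> 0+ *)
Definition seller_favorable {R : realType} {k : nat}
  (q : 'rV[R]_k -> 'rV[R]_k) (s : 'rV[R]_k -> R) : Prop :=
  forall x, nonneg x ->
    (fun d : R => (payoff q s (x + d *: x) - payoff q s x) / d) @ 0^'+
      --> (s x + payoff q s x).

(* Incentive compatibility of mu_n for the type (1+d)x against the report x
   gives s_n(x) <= (b_n((1+d)x) - b_n(x))/d - b_n(x) for every d > 0.  As
   n -> oo the right-hand side tends to the same quotient for b, and as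
   d -> 0+ that quotient tends to s(x) because mu is seller favorable.

   For the revenue, 0 <= s_n(x) <= q_n(x).x <= k M |x| with M a bound of the
   compact set Gamma, so a reverse Fatou lemma applies.  The payments need not
   be measurable, so the integrals are lower integrals (suprema over simple
   minorants); reverse Fatou is proved for them by picking near-optimal simple
   minorants and applying dominated convergence to their running suprema. *)
From HB Require Import structures.
From mathcomp Require Import all_boot all_order all_algebra.
From mathcomp Require Import all_classical all_reals all_analysis.
From mathcomp Require Import ring lra measurable_realfun.
Import Order.TTheory GRing.Theory Num.Theory.
Import numFieldNormedType.Exports.
Local Open Scope classical_set_scope.
Local Open Scope ring_scope.

Section LimnEsup.
Local Open Scope ereal_scope.
Context {R : realType}.
Implicit Types u v : (\bar R)^nat.

Lemma le_limn_esup u v : (forall n, u n <= v n) -> limn_esup u <= limn_esup v.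
Proof.
move=> uv; rewrite !limn_esup_lim; apply: lee_lim; try exact: is_cvg_esups.
apply: nearW => n; apply: ge_ereal_sup => _ [m /= nm <-].
by apply: le_trans (uv m) _; apply: ereal_sup_ubound; exists m.
Qed.

Lemma limn_esupDr_le u (c : R) :
  limn_esup (fun n => u n + c%:E) <= limn_esup u + c%:E.
Proof.
have cvg_shift : (fun n => esups u n + c%:E) @ \oo --> limn (esups u) + c%:E.
  by apply: cvgeD; [exact: fin_num_adde_defl|exact: is_cvg_esups|exact: cvg_cst].
rewrite !limn_esup_lim -(cvg_lim _ cvg_shift) //; apply: lee_lim.
- exact: is_cvg_esups.
- by apply/cvg_ex; eexists; exact: cvg_shift.
apply: nearW => n; apply: ge_ereal_sup => _ [m /= nm <-].
by apply: leeD2r; apply: ereal_sup_ubound; exists m.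
Qed.

Lemma limn_esup_ge0 u : (forall n, 0 <= u n) -> 0 <= limn_esup u.
Proof.
by move=> u0; rewrite -(cvg_limn_einf_sup (cvg_cst 0)).2; exact: le_limn_esup.
Qed.

End LimnEsup.

Section ReverseFatou.
Local Open Scope ereal_scope.
Import HBNNSimple.
Context {d : measure_display} {T : measurableType d} {R : realType}.
Variable mu : {measure set T -> \bar R}.

Lemma ge0_le_integralT (f g : T -> \bar R) :
  (forall x, 0 <= f x) -> (forall x, f x <= g x) ->
  \int[mu]_x f x <= \int[mu]_x g x.
Proof.
move=> f0 fg; have g0 x : 0 <= g x by exact: le_trans (f0 x) (fg x).
rewrite !ge0_integralTE //; apply: le_ereal_sup => _ [h hf <-].
by exists h => // x; exact: le_trans (hf x) (fg x).
Qed.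

Lemma integral_nnsfun_approx {f : T -> R} {eps : R} :
  (forall x, 0 <= f x)%R -> \int[mu]_x (f x)%:E \is a fin_num -> (0 < eps)%R ->
  exists h : {nnsfun T >-> R}, (forall x, (h x <= f x)%R) /\
    \int[mu]_x (f x)%:E < \int[mu]_x (h x)%:E + eps%:E.
Proof.
move=> f0 + eps0; have f0E x : 0 <= (f x)%:E by rewrite lee_fin.
rewrite ge0_integralTE // => /(ub_ereal_sup_adherent eps0) [_ [h hf <-]].
rewrite -ge0_integralTE // lteBlDr // => hlt; exists h.
split=> [x|]; first by rewrite -lee_fin; exact: hf.
apply: lt_le_trans hlt _; apply: leeD2r.
rewrite ge0_integralTE => [|x]; last by rewrite lee_fin.
by apply: ereal_sup_ubound; exists h.
Qed.

Lemma limn_esup_integral_nnsfun_le (h : nat -> {nnsfun T >-> R}) (G : T -> R) :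
  (forall n x, (h n x <= G x)%R) -> mu.-integrable setT (EFin \o G) ->
  limn_esup (fun n => \int[mu]_x (h n x)%:E)
    <= \int[mu]_x limn_esup (fun n => (h n x)%:E).
Proof.
move=> hG iG.
pose H n x := esups (fun m => (h m x)%:E) n.
have mh m : measurable_fun setT (fun x => (h m x)%:E).
  by apply/measurable_EFinP; exact: measurable_funPT.
have H0 n x : 0 <= H n x.
  apply: le_trans (_ : (h n x)%:E <= _); first by rewrite lee_fin.
  by apply: ereal_sup_ubound; exists n => /=.
have HG n x : `|H n x| <= (G x)%:E.
  by rewrite gee0_abs //; apply: ge_ereal_sup => _ [m _ <-]; rewrite lee_fin.
have cvgH : {ae mu, forall x, setT x ->
    H ^~ x @ \oo --> limn_esup (fun m => (h m x)%:E)}.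
  by apply: aeW => x _; rewrite limn_esup_lim; exact: is_cvg_esups.
have [_ _ cvgI] := dominated_convergence measurableT
  (fun n => measurable_fun_esups mh n) (measurable_fun_limn_esup mh)
  cvgH iG (aeW _ (fun x n _ => HG n x)).
rewrite limn_esup_lim -(cvg_lim _ cvgI) //; apply: lee_lim.
- exact: is_cvg_esups.
- by apply/cvg_ex; eexists; exact: cvgI.
apply: nearW => n; apply: ge_ereal_sup => _ [m /= nm <-].
apply: ge0_le_integralT => x; first by rewrite lee_fin.
by apply: ereal_sup_ubound; exists m.
Qed.

Lemma reverse_fatou_ge0 (f : nat -> T -> R) (G : T -> R) :
  (forall n x, 0 <= f n x)%R -> (forall n x, f n x <= G x)%R ->
  mu.-integrable setT (EFin \o G) ->
  limn_esup (fun n => \int[mu]_x (f n x)%:E)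
    <= \int[mu]_x limn_esup (fun n => (f n x)%:E).
Proof.
move=> f0 fG iG; apply/lee_addgt0Pr => eps eps0.
have Ifin n : \int[mu]_x (f n x)%:E \is a fin_num.
  rewrite ge0_fin_numE; last by apply: integral_ge0 => x _; rewrite lee_fin.
  move/integrableP: iG => [_]; apply: le_lt_trans; apply: ge0_le_integralT => x.
    by rewrite lee_fin.
  by rewrite /= lee_fin ger0_norm ?(fG n x) // (le_trans (f0 n x) (fG n x)).
have [h hf] := choice (fun n => integral_nnsfun_approx (f0 n) (Ifin n) eps0).
have hG n x : (h n x <= G x)%R by exact: le_trans ((hf n).1 x) (fG n x).
apply: le_trans (_ : limn_esup (fun n => \int[mu]_x (h n x)%:E + eps%:E) <= _).
  by apply: le_limn_esup => n; exact: ltW (hf n).2.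
apply: le_trans (limn_esupDr_le _ _) _; apply: leeD2r.
apply: le_trans (limn_esup_integral_nnsfun_le h G hG iG) _.
apply: ge0_le_integralT => x; first by apply: limn_esup_ge0 => n; rewrite lee_fin.
by apply: le_limn_esup => n; rewrite lee_fin; exact: (hf n).1.
Qed.

End ReverseFatou.

Section Mechanism.
Context {R : realType} {k : nat}.
Implicit Types (x y u : 'rV[R]_k) (q : 'rV[R]_k -> 'rV[R]_k) (s : 'rV[R]_k -> R).

Lemma dotv_dilate u x (d : R) : dotv u (x + d *: x) = (1 + d) * dotv u x.
Proof. by rewrite /dotv mulr_sumr; apply: eq_bigr => i _; rewrite !mxE; ring. Qed.

Lemma nonneg_dilate {x} {d : R} : nonneg x -> 0 <= d -> nonneg (x + d *: x).
Proof. by move=> x0 d0 i; rewrite !mxE addr_ge0 ?mulr_ge0. Qed.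

Section IncentiveCompatible.
Variables (q : 'rV[R]_k -> 'rV[R]_k) (s : 'rV[R]_k -> R).
Hypothesis icqs : IC q s.

Lemma le_payoff {x y} : nonneg x -> nonneg y -> dotv (q x) y - s x <= payoff q s y.
Proof.
move=> x0 y0; apply: ub_le_sup; last by exists x.
by exists (dotv (q y) y - s y) => _ [z z0 <-]; exact: icqs.
Qed.

Lemma payoff_truthful {y} : nonneg y -> payoff q s y = dotv (q y) y - s y.
Proof.
move=> y0; apply/eqP; rewrite eq_le le_payoff // andbT.
apply: ge_sup; first by exists (dotv (q y) y - s y), y.
by move=> _ [z z0 <-]; exact: icqs.
Qed.

Lemma price_le_payoff_slope x (d : R) : nonneg x -> 0 < d ->
  s x <= (payoff q s (x + d *: x) - payoff q s x) / d - payoff q s x.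
Proof.
move=> x0 d0; have := le_payoff x0 (nonneg_dilate x0 (ltW d0)).
rewrite dotv_dilate (payoff_truthful x0) lerBrDr ler_pdivlMr //.
set B := payoff q s _; set a := dotv (q x) x => le_aB; nra.
Qed.

End IncentiveCompatible.

Lemma limn_esup_price_le (qn : nat -> 'rV[R]_k -> 'rV[R]_k)
    (sn : nat -> 'rV[R]_k -> R) q s x :
  (forall n, IC (qn n) (sn n)) ->
  (forall y, payoff (qn n) (sn n) y @[n --> \oo] --> payoff q s y) ->
  seller_favorable q s -> nonneg x ->
  (limn_esup (fun n => (sn n x)%:E) <= (s x)%:E)%E.
Proof.
move=> icn payoff_cvg sf x0.
pose slope b d := (b (x + d *: x) - b x) / d - b x.
have le_slope d : 0 < d ->
    (limn_esup (fun n => (sn n x)%:E) <= (slope (payoff q s) d)%:E)%E.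
  move=> d0; have <- : limn_esup (fun n => (slope (payoff (qn n) (sn n)) d)%:E)
                       = (slope (payoff q s) d)%:E.
    apply: (cvg_limn_einf_sup _).2; apply: cvg_EFin; first exact: nearW.
    by apply: cvgB => //; apply: cvgMr_tmp; apply: cvgB.
  by apply: le_limn_esup => n; rewrite lee_fin; exact: price_le_payoff_slope.
have slope_cvg : (slope (payoff q s) d)%:E @[d --> 0^'+] --> (s x)%:E.
  apply: cvg_EFin; first exact: nearW.
  by rewrite -[s x](addrK (payoff q s x)); apply: cvgB; [exact: sf|exact: cvg_cst].
apply: (cvge_to_ge slope_cvg).
near=> d; apply: le_slope; near: d; exact: nbhs_right_gt.
Unshelve. all: by end_near.
Qed.

Lemma coord_le_norm y (i : 'I_k) : `|y ord0 i| <= `|y|.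
Proof.
rewrite [`|y|]mx_normrE.
exact: (le_bigmax _ (fun ij : 'I_1 * 'I_k => `|y ij.1 ij.2|) (ord0, i)).
Qed.

Lemma dotv_le_norm u y (M : R) : `|u| <= M -> dotv u y <= k%:R * M * `|y|.
Proof.
move=> uM; rewrite /dotv -mulrA mulr_natl -[k in _ *+ k]card_ord -sumr_const.
apply: ler_sum => i _; apply: le_trans (ler_norm _) _; rewrite normrM.
by apply: ler_pM => //; [exact: le_trans (coord_le_norm u i) uM|exact: coord_le_norm].
Qed.

Lemma price_le_norm (Gamma : set 'rV[R]_k) q s (M : R) x :
  in_M Gamma q s -> (forall u, Gamma u -> `|u| <= M) -> nonneg x ->
  s x <= k%:R * M * `|x|.
Proof.
move=> [inG [_ [ir _]]] GM x0; have := ir x x0; rewrite subr_ge0 => /le_trans.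
by apply; exact: dotv_le_norm (GM _ (inG x x0)).
Qed.

End Mechanism.

Theorem proposition4 (R : realType) (k : nat) (hk : (1 <= k)%N)
  (Gamma : set 'rV[R]_k)
  (hGc : compact Gamma) (hGn : Gamma !=set0) (hGp : Gamma `<=` nonneg)
  (qn : nat -> 'rV[R]_k -> 'rV[R]_k) (sn : nat -> 'rV[R]_k -> R)
  (q : 'rV[R]_k -> 'rV[R]_k) (s : 'rV[R]_k -> R)
  (hMn : forall n, in_M Gamma (qn n) (sn n))
  (hM : in_M Gamma q s)
  (hconv : forall x : 'rV[R]_k,
      (fun n => payoff (qn n) (sn n) x) @ \oo --> payoff q s x)
  (hsf : seller_favorable q s) :
  (forall x : 'rV[R]_k, nonneg x ->
      (limn_esup (fun n => (sn n x)%:E) <= (s x)%:E)%E)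
  /\
  (forall (d : measure_display) (T : measurableType d) (P : probability T R)
          (X : T -> 'rV[R]_k),
      (forall i : 'I_k, measurable_fun setT (fun w => X w ord0 i)) ->
      (forall w, nonneg (X w)) ->
      P.-integrable setT (fun w => (`|X w|)%:E) ->
      (limn_esup (fun n => \int[P]_w (sn n (X w))%:E)
         <= \int[P]_w (s (X w))%:E)%E).
Proof.
have icn n := (hMn n).2.1.
split=> [x|d T P X _ X0 iX]; first exact: limn_esup_price_le.
have [M0 [_ Gamma_bounded]] := compact_bounded hGc.
have normG u : Gamma u -> `|u| <= `|M0| + 1.
  by apply: Gamma_bounded; apply: le_lt_trans (ler_norm M0) _; rewrite ltrDl.
pose C := k%:R * (`|M0| + 1).
have iCX : P.-integrable setT (EFin \o (fun w => C * `|X w|)).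
  by rewrite /comp; under eq_fun do rewrite EFinM; exact: integrableZl.
apply: le_trans (reverse_fatou_ge0 P (fun n w => sn n (X w)) _ _ _ iCX) _.
- by move=> n w; exact: (hMn n).2.2.2.
- by move=> n w; exact: price_le_norm (hMn n) normG (X0 w).
apply: (ge0_le_integralT P) => w.
  by apply: limn_esup_ge0 => n; rewrite lee_fin; exact: (hMn n).2.2.2.
exact: limn_esup_price_le hconv hsf (X0 w).
Qed.
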